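(* For every $F\in\mathbb{N}$, the number $\mathrm{nF}(F)$ of reflective numerical semigroups with Frobenius number $F$ satisfies \[ \mathrm{nF}(F)=1-\tau_e(F)+\sum_{k=2}^{F}(-1)^k\left\lfloor \frac{F}{k}\right\rfloor, \] where $\tau_e(F)$ is the number of even positive divisors of $F$.
   Context: A numerical semigroup is a submonoid $S$ of $(\mathbb{N}_0,+)$ with finite complement; its genus is the number of elements of $\mathbb{N}_0\setminus S$ and its Frobenius number is its largest gap. A numerical semigroup $S$ of genus $g\ge1$ is called reflective if for every $z\in\{0,1,\dots,g-1\}$ exactly one of $z$ and $z+g$ belongs to $S$. *)

From mathcomp Require Import all_boot all_order all_algebra.
From mathcomp Require Import boolp.
Set Implicit Arguments. Unset Strict Implicit. Unset Printing Implicit Defensive.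

Definition numerical_semigroup (S : nat -> bool) : Prop :=
  [/\ S 0, (forall x y, S x -> S y -> S (x + y)) &
      exists N, forall x, N <= x -> S x].

Definition is_frobenius (S : nat -> bool) (F : nat) : Prop :=
  ~~ S F /\ forall x, F < x -> S x.

Definition has_genus (S : nat -> bool) (g : nat) : Prop :=
  exists N, (forall x, N <= x -> S x) /\ g = count (fun x => ~~ S x) (iota 0 N).

Definition reflective (S : nat -> bool) : Prop :=
  numerical_semigroup S /\
  exists g, [/\ has_genus S g, 1 <= g &
             forall z, z < g -> S z != S (z + g)].

(* A set S with all integers > F in S is determined by A = S ∩ {0..F}. *)
Definition sg_of (F : nat) (A : {set 'I_F.+1}) : nat -> bool :=
  fun x => (x < F.+1) ==> [exists i : 'I_F.+1, (val i == x) && (i \in A)].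

(* nF(F): number of reflective numerical semigroups with Frobenius number F,
   counted via their (bijective) encoding by S ∩ {0..F}. *)
Definition nF (F : nat) : nat :=
  #|[set A : {set 'I_F.+1} |
      `[< reflective (sg_of A) /\ is_frobenius (sg_of A) F >]]|.

Definition tau_e (F : nat) : nat :=
  count (fun d => (d %| F) && ~~ odd d) (iota 1 F).

(* A reflective numerical semigroup S of genus g is determined by m, its least nonzero
   element below g (or g itself if there is none): below g, S consists of the multiples of m,
   the reflection z |-> z + g swaps membership on [0, g), and S contains every x >= 2g because
   its g gaps are already found in [0, 2g).  Closure under addition forces m = g or m not
   dividing g.  The Frobenius number F then lies in [g, 2g) and F - g is the largest multiple
   of m below g, which pins down g = F - m * (F / 2m) and leaves the moduli m = F and the m
   with 2 <= m, 2m <= F, 0 < F mod 2m < m.  For m >= 1 exactly one of F mod 2m = 0,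
   0 < F mod 2m < m, F mod 2m >= m holds, so [0 < F mod 2m < m] + [2m | F] + F/m = 2(F/2m) + 1;
   summing over m <= F turns the sum of F/m - 2(F/2m) into the alternating sum. *)

From mathcomp Require Import all_boot all_order all_algebra.
From mathcomp Require Import zify ring boolp.
Import GRing.Theory.

Set Implicit Arguments.
Unset Strict Implicit.
Unset Printing Implicit Defensive.

Lemma count_gaps_reflective (S : nat -> bool) g :
  (forall z, z < g -> S z != S (z + g)) -> count (predC S) (iota 0 (2 * g)) = g.
Proof.
move=> hS; rewrite mul2n -addnn iotaD count_cat add0n.
have -> : iota g g = map (addn g) (iota 0 g) by rewrite -iotaDl addn0.
rewrite count_map (@eq_in_count _ (preim (addn g) (predC S)) S).
  by rewrite addnC count_predC size_iota.
move=> z; rewrite mem_iota => /andP [_ hz] /=.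
by move: (hS z hz); rewrite addnC; case: (S z); case: (S _).
Qed.

Lemma count_gaps_reflective_ge (S : nat -> bool) g N :
  (forall z, z < g -> S z != S (z + g)) -> 2 * g <= N ->
  count (predC S) (iota 0 N) = g + count (predC S) (iota (2 * g) (N - 2 * g)).
Proof.
by move=> hS hN; rewrite -{1}(subnKC hN) iotaD count_cat (count_gaps_reflective hS).
Qed.

Definition refl_sg (m g x : nat) : bool :=
  if x < g then m %| x else if x < 2 * g then ~~ (m %| (x - g)) else true.

Definition admissible (m g : nat) : bool := (0 < m <= g) && ((m == g) || ~~ (m %| g)).

Lemma refl_sg_ge m g x : 2 * g <= x -> refl_sg m g x.
Proof. by move=> hx; rewrite /refl_sg !ltnNge hx (leq_trans _ hx) ?leq_pmull. Qed.

Lemma refl_sg_shift m g z : z < g -> refl_sg m g (z + g) = ~~ refl_sg m g z.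
Proof.
by move=> hz; rewrite /refl_sg hz ltnNge leq_addl addnK /= (_ : z + g < 2 * g) //; lia.
Qed.

Lemma count_gaps_refl_sg m g N : 2 * g <= N -> count (predC (refl_sg m g)) (iota 0 N) = g.
Proof.
move=> hN; rewrite (count_gaps_reflective_ge _ hN) => [|z hz]; last first.
  by rewrite refl_sg_shift //; case: (refl_sg _ _ _).
rewrite -[RHS]addn0; congr (_ + _); apply/eqP; rewrite eqn0Ngt -has_count.
by apply/hasPn => x; rewrite mem_iota /= => /andP [hx _]; rewrite refl_sg_ge.
Qed.

Lemma refl_sg_reflective m g : admissible m g -> reflective (refl_sg m g).
Proof.
case/andP=> /andP [m0 mg] hmg; have g0 : 0 < g by apply: leq_trans mg.
have refl z : z < g -> refl_sg m g z != refl_sg m g (z + g).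
  by move=> hz; rewrite refl_sg_shift //; case: (refl_sg _ _ _).
split; last first.
  exists g; split=> //; exists (2 * g); split; first by move=> x; apply: refl_sg_ge.
  by rewrite count_gaps_refl_sg.
split; [by rewrite /refl_sg g0 dvdn0 | | by exists (2 * g) => x; apply: refl_sg_ge].
move=> x y; wlog xy : x y / x <= y.
  move=> W; case: (leqP x y) => [|/ltnW] h; first exact: W.
  by move=> Sx Sy; rewrite addnC; apply: W.
rewrite {1 2}/refl_sg; case: (ltnP y g) => yg; last first.
  case: (ltnP x g) => xg; last by move=> _ _; apply: refl_sg_ge; lia.
  case: ifP => [y2g dx ndy|/negbT y2g _ _]; last first.
    by apply: refl_sg_ge; lia.
  rewrite /refl_sg ltnNge (_ : g <= x + y) //=; last by lia.
  by case: ifP => // _; rewrite -addnBA // dvdn_addr.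
rewrite (leq_ltn_trans xy yg) => dx dy; rewrite /refl_sg dvdn_add //.
case: ifP => // /negbT; rewrite -leqNgt => gxy; case: ifP => // _.
case/orP: hmg => [/eqP mg_eq | ndg].
  have pos_mult z : m %| z -> z < g -> z = 0.
    by move=> dz zg; case: (posnP z) => // z0; have := dvdn_leq z0 dz; lia.
  by have := pos_mult _ dx (leq_ltn_trans xy yg); have := pos_mult _ dy yg; lia.
by apply: contra ndg => dxyg; rewrite -(dvdn_subr gxy (dvdn_add dx dy)).
Qed.

Definition frobenius_data (m g F : nat) : Prop :=
  [/\ g <= F < 2 * g, m %| F - g & forall y, F - g < y < g -> ~~ (m %| y)].

Lemma refl_sg_frobeniusP m g F : 0 < g -> is_frobenius (refl_sg m g) F <-> frobenius_data m g F.
Proof.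
move=> g0; split=> [[nSF SgtF]|[/andP [gF F2g] dFg ndvd]].
  have gF : g <= F.
    rewrite leqNgt; apply/negP => /SgtF; rewrite -[g]add0n refl_sg_shift //.
    by rewrite /refl_sg g0 dvdn0.
  have F2g : F < 2 * g by rewrite ltnNge; apply: contra nSF; apply: refl_sg_ge.
  move: nSF; rewrite /refl_sg ltnNge gF F2g negbK => dFg; split=> // [|y /andP [lty yg]].
    by rewrite gF.
  have /SgtF : F < y + g by lia.
  by rewrite refl_sg_shift // /refl_sg yg.
split; first by rewrite /refl_sg ltnNge gF F2g dFg.
move=> x ltFx; case: (leqP (2 * g) x) => [|x2g]; first exact: refl_sg_ge.
have xg : x - g < g by lia.
rewrite -(subnK (_ : g <= x)) ?refl_sg_shift //; last by lia.
by rewrite /refl_sg xg; apply: ndvd; lia.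
Qed.

Lemma refl_sg_inj m1 g1 m2 g2 : admissible m1 g1 -> admissible m2 g2 ->
  refl_sg m1 g1 =1 refl_sg m2 g2 -> m1 = m2 /\ g1 = g2.
Proof.
move=> adm1 adm2 eqS.
(* The genus, hence g, is read off S by counting its gaps. *)
have eq_g : g1 = g2.
  have c1 := count_gaps_refl_sg m1 (leq_mul (leqnn 2) (leq_maxl g1 g2)).
  have c2 := count_gaps_refl_sg m2 (leq_mul (leqnn 2) (leq_maxr g1 g2)).
  by rewrite -[X in X = _]c1 -[X in _ = X]c2; apply: eq_count => x; rewrite /= eqS.
split=> //; subst g2.
wlog lt12 : m1 m2 adm1 adm2 eqS / m1 < m2.
  move=> W; case: (ltngtP m1 m2) => // [lt12|lt21]; first exact: W.
  by symmetry; apply: W => // x; rewrite eqS.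
move: adm1 adm2 => /andP [/andP [m1_0 _] _] /andP [/andP [_ m2g] _].
have := eqS m1; rewrite /refl_sg (leq_trans lt12 m2g) dvdnn.
by rewrite (gtnNdvd m1_0 lt12).
Qed.

Section ReflectiveStructure.

Variables (S : nat -> bool) (g : nat).
Hypotheses (S0 : S 0) (S_add : forall x y, S x -> S y -> S (x + y)).
Hypotheses (g_gt0 : 0 < g) (S_refl : forall z, z < g -> S z != S (z + g)).

Lemma refl_genus_notin : ~~ S g.
Proof. by have := S_refl g_gt0; rewrite S0 add0n. Qed.

Lemma refl_mulnS k m : S m -> S (k * m).
Proof. by move=> Sm; elim: k => [|k IH]; rewrite ?mul0n // mulSn S_add. Qed.

Lemma refl_periodic a y : S a -> y + a < g -> S y = S (y + a).
Proof.
move=> Sa hya; case Sy: (S y); first by rewrite S_add.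
have Syg : S (y + g) by move: (S_refl (leq_ltn_trans (leq_addr a y) hya)); rewrite Sy; case: (S _).
move: (S_refl hya); rewrite addnAC (S_add Syg Sa).
by case: (S (y + a)).
Qed.

Lemma refl_low_multiples : exists2 m, admissible m g & forall x, x < g -> S x = (m %| x).
Proof.
(* Allowing a = g makes the minimum exist and equal g when S has no nonzero element below g. *)
have exP : exists a, (0 < a) && (S a || (a == g)) by exists g; rewrite g_gt0 eqxx orbT.
case: (ex_minnP exP) => m /andP [m_gt0 Sm_g] m_min.
have mg : m <= g by apply: m_min; rewrite g_gt0 eqxx orbT.
have Sm : m < g -> S m by move=> ltmg; move: Sm_g; rewrite (ltn_eqF ltmg) orbF.
have S_dvd x : x < g -> S x = (m %| x).
  elim/ltn_ind: x => x IH xg; case: (ltnP x m) => [ltxm|lemx].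
    case: (posnP x) => [->|x_gt0]; first by rewrite S0 dvdn0.
    rewrite (gtnNdvd x_gt0 ltxm); apply/negbTE/negP => Sx.
    by have := m_min x; rewrite x_gt0 Sx => /(_ isT); rewrite leqNgt ltxm.
  have ltmg : m < g by apply: leq_ltn_trans lemx xg.
  have ltxm_x : x - m < x by lia.
  rewrite -(subnK lemx) -refl_periodic ?subnK ?Sm // IH ?(leq_ltn_trans (leq_subr m x) xg) //.
  by rewrite dvdn_subl.
exists m => //; rewrite /admissible m_gt0 mg /=.
case: eqP => //= /eqP neq_mg; apply/negP => /dvdnP [k eg].
by move: refl_genus_notin; rewrite eg refl_mulnS // Sm // ltn_neqAle neq_mg.
Qed.

End ReflectiveStructure.

Lemma reflective_mem_ge (S : nat -> bool) g : has_genus S g ->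
  (forall z, z < g -> S z != S (z + g)) -> forall x, 2 * g <= x -> S x.
Proof.
move=> [N [SN genus]] S_refl x le2gx; apply/negPn/negP => nSx.
have ltxN : x < N by rewrite ltnNge; apply: contra nSx => /SN.
move: genus; rewrite (count_gaps_reflective_ge S_refl (leq_trans le2gx (ltnW ltxN))).
have : has (predC S) (iota (2 * g) (N - 2 * g)).
  by apply/hasP; exists x => //; rewrite mem_iota; lia.
rewrite has_count; lia.
Qed.

Lemma reflective_refl_sg S : reflective S -> exists m g, admissible m g /\ S =1 refl_sg m g.
Proof.
move=> [[S0 S_add _] [g [genus g_gt0 S_refl]]].
have [m adm S_low] := refl_low_multiples S0 S_add g_gt0 S_refl.
exists m, g; split=> // x; rewrite /refl_sg.
case: ifP => [|/negbT]; first exact: S_low; rewrite -leqNgt => gx.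
case: ifP => [x2g|/negbT]; last by rewrite -leqNgt => /(reflective_mem_ge genus S_refl).
have xg : x - g < g by lia.
by move: (S_refl _ xg); rewrite subnK // S_low //; case: (S x); case: (_ %| _).
Qed.

Definition proper_modulus (F m : nat) : bool :=
  [&& 2 <= m, 2 * m <= F & 0 < F %% (2 * m) < m].

Definition modulus (F m : nat) : bool := (m == F) || proper_modulus F m.

Definition modulus_genus (F m : nat) : nat := F - m * (F %/ (2 * m)).

Lemma multiple_between m q y : m * q < y < m * q + m -> ~~ (m %| y).
Proof.
case/andP=> lo hi; apply/negP => /dvdnP [k eq_y]; rewrite {y}eq_y [k * m]mulnC in lo hi.
have m_gt0 : 0 < m by case: m lo hi => //; rewrite !muln0.
rewrite ltn_pmul2l // in lo; rewrite addnC -mulnS ltn_pmul2l // in hi.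
lia.
Qed.

Lemma modulus_genus_self F : modulus_genus F F = F.
Proof.
by case: F => // F; rewrite /modulus_genus divn_small ?muln0 ?subn0 //; lia.
Qed.

Lemma frobenius_data_modulus m g F : admissible m g -> frobenius_data m g F ->
  modulus F m /\ g = modulus_genus F m.
Proof.
case/andP=> /andP [m_gt0 mg] m_g [/andP [gF F2g] dFg ndvd].
case/orP: m_g => [/eqP eq_mg|ndvd_g].
  subst g; have F_eq : F = m.
    by case: (posnP (F - m)) => [|pos]; [lia | have := dvdn_leq pos dFg; lia].
  by rewrite /modulus F_eq eqxx modulus_genus_self.
case/dvdnP: dFg => q eq_Fg.
have ltmg : m < g by rewrite ltn_neqAle mg andbT; apply: contraNneq ndvd_g => ->.
have q_gt0 : 0 < q.
  by case: (posnP q) => // q0; move: (ndvd m); rewrite eq_Fg q0 mul0n m_gt0 ltmg dvdnn => /(_ isT).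
have lt_g : g < q * m + m.
  rewrite ltnNge leq_eqVlt addnC -mulSn; apply/negP => /orP [/eqP eq_g|lt_g].
    by move: ndvd_g; rewrite -eq_g dvdn_mull.
  have : F - g < q.+1 * m < g by rewrite mulSn; lia.
  by move/ndvd; rewrite dvdn_mull.
have eq_F : F = q * (2 * m) + (g - q * m) by lia.
have lt_r : g - q * m < 2 * m by lia.
have -> : modulus_genus F m = g by rewrite /modulus_genus eq_F divnMDl ?divn_small; lia.
split=> //; apply/orP; right; rewrite /proper_modulus eq_F modnMDl modn_small //.
have m_ge2 : 2 <= m.
  by case: (ltnP 1 m) => // m_le1; move: ndvd_g; rewrite (_ : m = 1) ?dvd1n //; lia.
apply/and3P; split=> //; have := leq_pmull (2 * m) q_gt0; lia.
Qed.

Lemma modulus_frobenius_data F m : 0 < F -> modulus F m ->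
  admissible m (modulus_genus F m) /\ frobenius_data m (modulus_genus F m) F.
Proof.
move=> F_gt0; case/orP=> [/eqP ->|].
  rewrite modulus_genus_self /admissible /frobenius_data F_gt0 leqnn eqxx; split=> //.
  split; [lia | by rewrite subnn dvdn0 | move=> y /andP [y_gt0 yF]].
  by rewrite subnn in y_gt0; rewrite gtnNdvd.
case/and3P=> m_ge2 mF /andP [r_gt0 r_lt].
have := divn_eq F (2 * m); set q := F %/ (2 * m); set r := F %% (2 * m) => eq_F.
have q_gt0 : 0 < q by rewrite lt0n; apply/eqP => q0; move: eq_F mF; rewrite q0; lia.
have -> : modulus_genus F m = m * q + r by rewrite /modulus_genus -/q; lia.
have lt_mq : m <= m * q by rewrite leq_pmulr.
split.
  rewrite /admissible (multiple_between (q := q)); last by lia.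
  by apply/andP; split; [apply/andP; split; lia | rewrite orbT].
split; [lia | | move=> y /andP [lo hi]; apply: (multiple_between (q := q)); lia].
by rewrite (_ : F - (m * q + r) = m * q) ?dvdn_mulr //; lia.
Qed.

Lemma modulus_leq F m : modulus F m -> m <= F.
Proof. by case/orP=> [/eqP -> // | /and3P [_ mF _]]; apply: leq_trans mF; rewrite leq_pmull. Qed.

Lemma reflective_frobeniusP S F : 0 < F ->
  reflective S /\ is_frobenius S F <-> exists2 m, modulus F m & S =1 refl_sg m (modulus_genus F m).
Proof.
move=> F_gt0; split=> [[reflS frobS] | [m mod_m /funext ->]].
  have [m [g [adm /funext eqS]]] := reflective_refl_sg reflS.
  have g_gt0 : 0 < g by case/andP: adm => /andP [m_gt0 mg] _; apply: leq_trans mg.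
  move: frobS; rewrite eqS refl_sg_frobeniusP // => /(frobenius_data_modulus adm) [mod_m ->].
  by exists m.
have [adm data] := modulus_frobenius_data F_gt0 mod_m.
split; first exact: refl_sg_reflective.
by rewrite refl_sg_frobeniusP //; case/andP: adm => /andP [m_gt0 mg] _; apply: leq_trans mg.
Qed.

Lemma sg_of_mem F (A : {set 'I_F.+1}) (i : 'I_F.+1) : sg_of A i = (i \in A).
Proof.
rewrite /sg_of ltn_ord /=; apply/existsP/idP => [[j /andP [/eqP eq_ij]]|Ai].
  by rewrite (val_inj eq_ij).
by exists i; rewrite eqxx.
Qed.

Lemma sg_of_frobenius F (S : nat -> bool) : (forall x, F < x -> S x) ->
  sg_of [set i : 'I_F.+1 | S i] =1 S.
Proof.
move=> S_gtF x; rewrite /sg_of; case: ltnP => [ltxF|leFx] /=; last by rewrite S_gtF.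
apply/existsP/idP => [[i /andP [/eqP <-]]|Sx]; first by rewrite inE.
by exists (Ordinal ltxF); rewrite inE eqxx.
Qed.

Lemma nF_modulus F : 0 < F -> nF F = #|[set m : 'I_F.+1 | modulus F m]|.
Proof.
move=> F_gt0; pose T (m : 'I_F.+1) := [set i : 'I_F.+1 | refl_sg m (modulus_genus F m) i].
have sg_T (m : 'I_F.+1) : modulus F m -> sg_of (T m) =1 refl_sg m (modulus_genus F m).
  move=> mod_m; apply: sg_of_frobenius.
  have [_ [_ S_gtF]] : reflective (refl_sg m (modulus_genus F m)) /\
                       is_frobenius (refl_sg m (modulus_genus F m)) F.
    by apply/(reflective_frobeniusP _ F_gt0); exists m.
  exact: S_gtF.
rewrite /nF; have -> : [set A | `[< reflective (sg_of A) /\ is_frobenius (sg_of A) F >]] =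
          T @: [set m : 'I_F.+1 | modulus F m].
  apply/setP => A; rewrite inE; apply/asboolP/imsetP.
    case/(reflective_frobeniusP _ F_gt0) => m mod_m eqS.
    exists (Ordinal (modulus_leq mod_m : m < F.+1)); first by rewrite inE.
    by apply/setP => i; rewrite -sg_of_mem eqS inE.
  case=> m; rewrite inE => mod_m ->; apply/(reflective_frobeniusP _ F_gt0).
  by exists m => // x; rewrite sg_T.
rewrite card_in_imset // => m1 m2; rewrite !inE => mod1 mod2 eqT; apply: val_inj.
have [adm1 _] := modulus_frobenius_data F_gt0 mod1.
have [adm2 _] := modulus_frobenius_data F_gt0 mod2.
have eqS : refl_sg m1 (modulus_genus F m1) =1 refl_sg m2 (modulus_genus F m2).
  by move=> x; rewrite -(sg_T m1) // eqT sg_T.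
by have [] := refl_sg_inj adm1 adm2 eqS.
Qed.

Lemma proper_modulusE F m : 0 < m <= F -> proper_modulus F m = (0 < F %% (2 * m) < m).
Proof.
case/andP=> m_gt0 mF; rewrite /proper_modulus; case: (ltnP 1 m) => [m_ge2|m_le1] /=; last first.
  by apply/esym/negbTE; rewrite negb_and -!leqNgt; lia.
case: (leqP (2 * m) F) => // lt_F; rewrite modn_small //.
by apply/esym/negbTE; rewrite negb_and -!leqNgt; lia.
Qed.

Lemma divn_double_mod F m : 0 < m ->
  (0 < F %% (2 * m) < m) + (2 * m %| F) + F %/ m = (F %/ (2 * m)).*2.+1.
Proof.
move=> m_gt0; have := divn_eq F (2 * m); have := @ltn_pmod F (2 * m).
set q := F %/ (2 * m); set r := F %% (2 * m).
rewrite muln_gt0 m_gt0 => /(_ isT) r_lt eq_F.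
have -> : F %/ m = q.*2 + (m <= r).
  rewrite eq_F (_ : q * (2 * m) = q.*2 * m); last by lia.
  rewrite divnMDl //; congr (_ + _); case: (leqP m r) => [le_mr|lt_rm]; last exact: divn_small.
  by rewrite -(subnK le_mr) divnDr // divnn m_gt0 divn_small //; lia.
rewrite /dvdn -/r; case: (posnP r) => [->|r_gt0] /=; first by rewrite leqNgt m_gt0; lia.
by case: (leqP m r) => /=; lia.
Qed.

Local Open Scope ring_scope.

Lemma sum_even_nat (R : nmodType) (f : nat -> R) n :
  \sum_(0 <= k < 2 * n) (if odd k then 0 else f k) = \sum_(0 <= m < n) f (2 * m)%N.
Proof.
elim: n => [|n IH]; first by rewrite !big_geq.
by rewrite mulnS add2n !big_nat_recr //= IH oddM /= addr0.
Qed.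

Lemma sum_even_nat_vanishing (R : nmodType) (f : nat -> R) n :
  f 0%N = 0 -> (forall k, (n < k)%N -> f k = 0) ->
  \sum_(1 <= k < n.+1) (if odd k then 0 else f k) = \sum_(1 <= m < n.+1) f (2 * m)%N.
Proof.
move=> f0 f_gt; have := sum_even_nat f n.+1.
rewrite (@big_cat_nat _ _ _ n.+1) //=; last by rewrite leq_pmull.
rewrite [X in X + _ = _]big_ltn // [X in _ = X]big_ltn //= ?muln0 f0 !add0r => <-.
rewrite [X in _ + X]big1_seq ?addr0 // => k /andP [_].
by rewrite mem_index_iota => /andP [lt_nk _]; rewrite f_gt // if_same.
Qed.

Lemma sum_sign_nat (R : pzRingType) (f : nat -> R) m n :
  \sum_(m <= k < n) (-1) ^+ k * f k =
  (\sum_(m <= k < n) (if odd k then 0 else f k)) *+ 2 - \sum_(m <= k < n) f k.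
Proof.
rewrite -sumrMnl -sumrB; apply: eq_bigr => k _.
rewrite -signr_odd; case: (odd k); rewrite ?expr0 ?expr1 /=.
  by rewrite mulN1r mul0rn sub0r.
by rewrite mul1r mulr2n addrK.
Qed.

Lemma tau_e_sum F : (0 < F)%N -> (tau_e F)%:Z = \sum_(1 <= m < F.+1) ((2 * m %| F) : nat)%:Z.
Proof.
move=> F_gt0; rewrite -(@sum_even_nat_vanishing _ (fun k => ((k %| F) : nat)%:Z)); last 2 first.
- by rewrite dvd0n (negbTE (lt0n_neq0 F_gt0)).
- by move=> k lt_Fk; rewrite gtnNdvd.
rewrite /tau_e -sum1_count big_mkcond (big_morph Posz PoszD (erefl _)) /=.
by rewrite /index_iota subn1 /=; apply: eq_bigr => k _; case: odd; rewrite ?andbF ?andbT.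
Qed.

Lemma proper_modulus_int F m : (0 < m <= F)%N ->
  (proper_modulus F m : nat)%:Z =
  1 + (F %/ (2 * m))%:Z *+ 2 - ((2 * m %| F) : nat)%:Z - (F %/ m)%:Z.
Proof.
case/andP=> m_gt0 mF; have := divn_double_mod F m_gt0.
by rewrite proper_modulusE ?m_gt0 //; lia.
Qed.

Lemma sum_proper_modulus F : (0 < F)%N ->
  (\sum_(1 <= m < F.+1) proper_modulus F m)%N%:Z =
  - (tau_e F)%:Z + \sum_(2 <= k < F.+1) (-1) ^+ k * (F %/ k)%:Z.
Proof.
move=> F_gt0; rewrite (big_morph Posz PoszD (erefl _)).
under eq_big_nat => m /andP [m_gt0 ltmF] do rewrite proper_modulus_int ?m_gt0 //.
rewrite !big_split /= !sumrN sumr_const_nat subSS subn0 tau_e_sum //.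
have -> : \sum_(2 <= k < F.+1) (-1) ^+ k * (F %/ k)%:Z =
          F%:Z + \sum_(1 <= k < F.+1) (-1) ^+ k * (F %/ k)%:Z.
  by rewrite (@big_ltn _ _ _ 1) // divn1 expr1 mulN1r addrA subrr add0r.
rewrite sum_sign_nat (@sum_even_nat_vanishing _ (fun k => (F %/ k)%:Z)) ?divn0 //; last first.
  by move=> k lt_Fk; rewrite divn_small.
by rewrite natz mulr2n; ring.
Qed.

Lemma card_modulus F : (0 < F)%N ->
  #|[set m : 'I_F.+1 | modulus F m]| = (1 + \sum_(1 <= m < F.+1) proper_modulus F m)%N.
Proof.
move=> F_gt0; rewrite -sum1_card big_mkcond /=.
under eq_bigr do rewrite inE.
rewrite -(big_mkord xpredT (fun m => (modulus F m : nat))) big_ltn //.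
rewrite !big_nat_recr //= /modulus eqxx eq_sym (negbTE (lt0n_neq0 F_gt0)) /=.
rewrite /proper_modulus (_ : (2 * F <= F)%N = false) /= ?andbF; last by apply/negbTE; lia.
rewrite addn0 addn1 add1n; congr _.+1.
by apply: eq_big_nat => m /andP [_ ltmF]; rewrite (ltn_eqF ltmF).
Qed.

Theorem mainTheorem19 (F : nat) (hF : (1 <= F)%N) :
  (nF F)%:Z = 1 - (tau_e F)%:Z
              + \sum_(2 <= k < F.+1) (-1) ^+ k * (F %/ k)%:Z.
Proof.
by rewrite nF_modulus // card_modulus // PoszD sum_proper_modulus // addrA.
Qed.
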